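(* Let $G$ be a graph with a tree decomposition $\mathcal{T}$ of width $w$, and let $\mathcal{F}=\{F_1,\dots,F_k\}$ be a set of forests, each a subgraph of $G$ consisting of vertex-disjoint rooted trees. Then there is a tree decomposition $\mathcal{T}'$ of $G$ of width $O(wk)$ such that for every tree $T$ of every forest in $\mathcal{F}$ and every vertex $v\in V(T)$, some bag of $\mathcal{T}'$ contains both $v$ and the root of $T$.
   Context: Standard tree decompositions: a tree whose nodes (bags) are vertex subsets such that every vertex lies in some bag, every edge has both endpoints in some bag, and the bags containing any fixed vertex form a connected subtree; width = maximum bag size minus one. *)

From mathcomp Require Import all_boot.
Set Implicit Arguments. Unset Strict Implicit. Unset Printing Implicit Defensive.

Definition simple_graph (V : finType) (E : rel V) : Prop :=
  symmetric E /\ irreflexive E.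

Definition acyclic (V : finType) (E : rel V) : Prop :=
  forall s : seq V, uniq s -> 2 < size s -> ~~ cycle E s.

Definition is_tree (I : finType) (tE : rel I) : Prop :=
  [/\ simple_graph tE, 0 < #|I|,
      (forall x y : I, connect tE x y) & acyclic tE].

Definition tree_decomposition (V : finType) (E : rel V)
    (I : finType) (tE : rel I) (B : I -> {set V}) : Prop :=
  [/\ is_tree tE,
      (forall v : V, exists i : I, v \in B i),
      (forall u v : V, E u v -> exists i : I, (u \in B i) && (v \in B i)) &
      (forall (v : V) (x y : I), v \in B x -> v \in B y ->
         connect [rel a b | [&& tE a b, v \in B a & v \in B b]] x y)].

Definition td_width (V I : finType) (B : I -> {set V}) : nat :=
  (\max_(i : I) #|B i|) - 1.

Definition rooted_forest (V : finType) (E : rel V)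
    (S : {set V}) (FE : rel V) (R : {set V}) : Prop :=
  [/\ simple_graph FE,
      (forall u v, FE u v -> [&& E u v, u \in S & v \in S]),
      acyclic FE,
      R \subset S &
      (forall v, v \in S -> exists! r, r \in R /\ connect FE v r)].

From mathcomp Require Import all_boot.
From mathcomp Require Import zify.
Set Implicit Arguments. Unset Strict Implicit. Unset Printing Implicit Defensive.

(* Keep the decomposition tree and enlarge every bag B i by
   the roots of all vertices of B i: for each forest F_j and each v in B i
   that lies in F_j, add the root of the tree of F_j containing v.

   Each
   augmented bag has size at most (k + 1) |B i| when every A u has at most
   k elements.  The root map of a family of k rooted forests satisfies both
   hypotheses (the tree path from v to its root is such a path, and every
   vertex has at most one root per forest), which gives a decomposition of
   width at most (k + 1)(w + 1) - 1 <= 4 max(w,1) max(k,1). *)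

Lemma card_bigcup_leq (T I : finType) (P : {pred I}) (F : I -> {set T}) :
  #|\bigcup_(i in P) F i| <= \sum_(i in P) #|F i|.
Proof.
apply: (big_ind2 (fun (X : {set T}) n => #|X| <= n)) => [|X m Y n hX hY|//].
  by rewrite cards0.
exact: leq_trans (leq_card_setU X Y).1 (leq_add hX hY).
Qed.

Section AugmentedDecomposition.

Variables (V : finType) (E : rel V) (I : finType) (tE : rel I).
Variable B : I -> {set V}.
Hypothesis tdB : tree_decomposition E tE B.

Definition bag_rel (C : I -> {set V}) (x : V) : rel I :=
  [rel a b | [&& tE a b, x \in C a & x \in C b]].

Variable A : V -> {set V}.

Definition augmented_bag (i : I) : {set V} := B i :|: \bigcup_(u in B i) A u.

Lemma bag_sub_augmented i x : x \in B i -> x \in augmented_bag i.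
Proof. by move=> xB; rewrite inE xB. Qed.

Lemma A_sub_augmented i u x : u \in B i -> x \in A u -> x \in augmented_bag i.
Proof. by move=> uB xA; rewrite inE; apply/orP; right; apply/bigcupP; exists u. Qed.

Lemma connect_bag_lift x y a b :
  (forall i, y \in B i -> x \in augmented_bag i) ->
  connect (bag_rel B y) a b -> connect (bag_rel augmented_bag x) a b.
Proof.
move=> yx; apply: connect_sub => p q /and3P [tpq yp yq].
by apply: connect1; rewrite /bag_rel /= tpq !yx.
Qed.

Hypothesis A_connected : forall u x, x \in A u ->
  connect [rel a b | [&& E a b, x \in A a & x \in A b]] u x.

Lemma augmented_reaches_bag x a : x \in augmented_bag a ->
  exists2 c, x \in B c & connect (bag_rel augmented_bag x) a c.
Proof.
have [_ _ E_bag B_conn] := tdB.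
rewrite inE => /orP [xB | /bigcupP [u uB xAu]]; first by exists a.
have /connectP [p Ap x_last] := A_connected xAu.
elim: p u a uB xAu Ap x_last => [|y p IHp] u a uB xAu /=.
  by move=> _ ->; exists a.
case/andP => /and3P [Euy _ xAy] Ap x_last.
have [b /andP [ub yb]] := E_bag u y Euy.
have [c xc bc] := IHp y b yb xAy Ap x_last.
exists c => //.
have ab : connect (bag_rel augmented_bag x) a b.
  apply: (@connect_bag_lift x u) (B_conn u a b uB ub) => i ui.
  exact: A_sub_augmented ui xAu.
exact: connect_trans ab bc.
Qed.

Lemma augmented_tree_decomposition : tree_decomposition E tE augmented_bag.
Proof.
have [tree_tE B_cover E_bag B_conn] := tdB.
have [[tE_sym _] _ _ _] := tree_tE.
split=> // [v | u v /E_bag [i /andP [ui vi]] | x a b xa xb].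
- by have [i vi] := B_cover v; exists i; apply: bag_sub_augmented.
- by exists i; rewrite !bag_sub_augmented.
have rel_sym : symmetric (bag_rel augmented_bag x).
  by move=> p q; rewrite /bag_rel /= tE_sym; congr (_ && _); apply: andbC.
have [c xc ac] := augmented_reaches_bag xa.
have [d xd bd] := augmented_reaches_bag xb.
have cd : connect (bag_rel augmented_bag x) c d.
  exact: connect_bag_lift (@bag_sub_augmented^~ x) (B_conn x c d xc xd).
rewrite (sym_connect_sym rel_sym) in bd.
exact: connect_trans ac (connect_trans cd bd).
Qed.

Lemma card_augmented_bag k i :
  (forall u, #|A u| <= k) -> #|augmented_bag i| <= k.+1 * #|B i|.
Proof.
move=> A_small; apply: leq_trans (leq_card_setU _ _).1 _.
rewrite mulSn leq_add // mulnC -sum_nat_const.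
apply: leq_trans (card_bigcup_leq _ _) _.
exact: leq_sum.
Qed.

End AugmentedDecomposition.

Section ForestRoots.

Variables (V : finType) (E : rel V) (S : {set V}) (FE : rel V) (R : {set V}).
Hypothesis forest : rooted_forest E S FE R.

(* The root of the tree containing u (a singleton), or empty if u is not
   a vertex of the forest. *)
Definition forest_roots (u : V) : {set V} :=
  [set r in R | (u \in S) && connect FE u r].

Lemma card_forest_roots u : #|forest_roots u| <= 1.
Proof.
have [_ _ _ _ root_unique] := forest.
apply/card_le1_eqP => r r'; rewrite !inE => /and3P [rR uS ur] /and3P [r'R _ ur'].
have [r0 [_ r0_unique]] := root_unique u uS.
by rewrite -(r0_unique r (conj rR ur)) -(r0_unique r' (conj r'R ur')).
Qed.

Lemma forest_roots_connected u r : r \in forest_roots u ->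
  connect [rel a b | [&& E a b, r \in forest_roots a & r \in forest_roots b]] u r.
Proof.
have [_ FE_sub _ _ _] := forest.
rewrite inE => /and3P [rR uS /connectP [p FEp r_last]].
elim: p u uS FEp r_last => [|y p IHp] u uS /= => [_ -> // | /andP [FEuy FEp] r_last].
have /and3P [Euy _ yS] := FE_sub u y FEuy.
have reach z q : path FE z q -> r = last z q -> connect FE z r.
  by move=> FEq ->; apply/connectP; exists q.
apply: connect_trans (IHp y yS FEp r_last); apply: connect1.
rewrite /= !inE Euy rR uS yS (reach y p) // (reach u (y :: p)) //=.
by rewrite FEuy.
Qed.

End ForestRoots.

Definition family_roots (V : finType) (k : nat) (S : 'I_k -> {set V})
    (FE : 'I_k -> rel V) (R : 'I_k -> {set V}) (u : V) : {set V} :=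
  \bigcup_(j < k) forest_roots (S j) (FE j) (R j) u.

Section FamilyRoots.

Variables (V : finType) (E : rel V) (k : nat).
Variables (S : 'I_k -> {set V}) (FE : 'I_k -> rel V) (R : 'I_k -> {set V}).
Hypothesis forests : forall j, rooted_forest E (S j) (FE j) (R j).

(* Every vertex has at most one root per forest. *)
Lemma card_family_roots u : #|family_roots S FE R u| <= k.
Proof.
apply: leq_trans (card_bigcup_leq _ _) _.
rewrite -[k in _ <= k]card_ord -sum1_card.
by apply: leq_sum => j _; apply: card_forest_roots.
Qed.

(* The root map of the family satisfies the hypothesis of the augmentation
   principle, through the forest containing the tree path. *)
Lemma family_roots_connected u r : r \in family_roots S FE R u ->
  connect [rel a b | [&& E a b, r \in family_roots S FE R a
                                 & r \in family_roots S FE R b]] u r.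
Proof.
rewrite /family_roots => /bigcupP [j _ /(forest_roots_connected (forests j))].
apply: connect_sub => a b /and3P [Eab ra rb]; apply: connect1.
by rewrite /= Eab /=; apply/andP; split; apply/bigcupP; exists j.
Qed.

End FamilyRoots.

Lemma width_arith (w k m : nat) :
  m <= k.+1 * w.+1 -> m - 1 <= 4 * maxn w 1 * maxn k 1.
Proof.
have k_le : k.+1 <= 2 * maxn k 1 by lia.
have w_le : w.+1 <= 2 * maxn w 1 by lia.
have := leq_mul k_le w_le; lia.
Qed.

Theorem lemma6p2 :
  exists c : nat,
  forall (V : finType) (E : rel V), simple_graph E ->
  forall (I : finType) (tE : rel I) (B : I -> {set V}) (w : nat),
    tree_decomposition E tE B -> td_width B = w ->
  forall (k : nat) (S : 'I_k -> {set V}) (FE : 'I_k -> rel V)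
         (R : 'I_k -> {set V}),
    (forall j, rooted_forest E (S j) (FE j) (R j)) ->
  exists (I' : finType) (tE' : rel I') (B' : I' -> {set V}),
    [/\ tree_decomposition E tE' B',
        td_width B' <= c * maxn w 1 * maxn k 1 &
        forall (j : 'I_k) (v r : V), v \in S j -> r \in R j ->
          connect (FE j) v r ->
          exists i : I', (v \in B' i) && (r \in B' i)].
Proof.
exists 4 => V E _ I tE B w tdB width_B k S FE R forests.
pose A := family_roots S FE R.
exists I, tE, (augmented_bag B A); split.
- exact: augmented_tree_decomposition (family_roots_connected forests).
- apply: width_arith; apply/bigmax_leqP => i _.
  apply: leq_trans (card_augmented_bag B i (card_family_roots forests)) _.
  rewrite leq_mul2l -width_B /td_width; apply/orP; right.
  have := @leq_bigmax _ (fun i => #|B i|) i; lia.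
- move=> j v r vS rR vr; have [_ B_cover _ _] := tdB.
  have [i vi] := B_cover v; exists i.
  rewrite bag_sub_augmented //=; apply: A_sub_augmented vi _.
  by rewrite /A /family_roots; apply/bigcupP; exists j => //; rewrite inE rR vS vr.
Qed.
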